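(* Consider a system with a finite set $S$ of tasks and minimum average reward requirements $q^*_X>0$ (as in the context), and a scheduling policy $\eta$ under which the evolution of the system state $D(k)=[d_X(k) : X\in S]$, $k=0,1,2,\dots$, is a Markov chain. If this Markov chain is irreducible and positive recurrent, then the system is fulfilled by $\eta$.
   Context: A system consists of a finite set $S$ of tasks. Time is slotted, $t\in\{0,1,2,\dots\}$. Each task $X\in S$ has a period $\tau_X$ (a positive integer); time is partitioned into consecutive periods of $X$ of $\tau_X$ slots each, the first starting at $t=0$, and in each period $X$ has one job, removed at the end of the period. Let $T=\mathrm{lcm}\{\tau_X : X\in S\}$; time is partitioned into consecutive frames of $T$ slots each, the $k$-th frame ($k=1,2,\dots$) being the $k$-th such block starting from $t=0$. A scheduling policy (possibly randomized) chooses in each slot either to idle or to execute the job of exactly one task. Each task $X$ has rewards $r^1_X\ge r^2_X\ge\dots\ge r^{\tau_X}_X\ge 0$: executing the job of $X$ for the $i$-th time within a period yields reward $r^i_X$ to $X$. Let $s_X(t)$ be the total reward obtained by $X$ between time 0 and $t$; the average reward is $q_X=\liminf_{t\to\infty}s_X(t)/(t/T)$. Each task has a requirement $q^*_X>0$; a policy fulfills the system if $q_X\ge q^*_X$ with probability 1 for all $X\in S$. Let $\tilde q_X(k)$ be the total reward obtained by $X$ during the $k$-th frame. The debt of $X$ is defined by $d_X(0)=0$ and $d_X(k)=[d_X(k-1)+q^*_X-\tilde q_X(k)]^+$ for $k>0$, where $[x]^+=\max\{x,0\}$. The state of the system at frame $k$ is the vector of debts $[d_X(k) : X\in S]$. 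*)

From HB Require Import structures.
From mathcomp Require Import all_boot all_order all_algebra.
From mathcomp Require Import all_classical all_reals all_analysis.
Set Implicit Arguments. Unset Strict Implicit. Unset Printing Implicit Defensive.
Import Order.TTheory GRing.Theory Num.Theory.
Local Open Scope classical_set_scope.
Local Open Scope ring_scope.
Local Open Scope ereal_scope.

(* A schedule is a map  nat -> option S : at slot t, [None] = idle,
   [Some X] = execute the (current) job of task X. *)

Section System.
Variables (R : realType) (S : finType).
Variables (tau : S -> nat) (r : S -> nat -> R) (qs : S -> R).

(* number of times X has been executed in the current period of X,
   up to and including slot t *)
Definition exec_count (sched : nat -> option S) (X : S) (t : nat) : nat :=
  (\sum_(t - t %% tau X <= u < t.+1) (sched u == Some X))%N.

Definition slot_reward (sched : nat -> option S) (X : S) (t : nat) : R :=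
  if sched t == Some X then r X (exec_count sched X t) else 0%R.

Definition cum_reward (sched : nat -> option S) (X : S) (t : nat) : R :=
  (\sum_(0 <= u < t) slot_reward sched X u)%R.

Definition frame_len : nat := \big[lcmn/1%N]_(X : S) tau X.

Definition frame_reward (sched : nat -> option S) (X : S) (k : nat) : R :=
  (\sum_(k.-1 * frame_len <= u < k * frame_len) slot_reward sched X u)%R.

Fixpoint debt (sched : nat -> option S) (X : S) (k : nat) : R :=
  match k with
  | 0 => 0%R
  | k'.+1 => Num.max 0%R (debt sched X k' + qs X - frame_reward sched X k'.+1)%R
  end.

Definition sys_state (sched : nat -> option S) (k : nat) : {ffun S -> R} :=
  [ffun X => debt sched X k].

Definition avg_reward_meets (sched : nat -> option S) (X : S) : Prop :=
  (qs X)%:E <= limn_einf (fun t => (cum_reward sched X t / (t%:R / (frame_len)%:R))%:E).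

End System.

Section Markov.
Variables (R : realType) (V : choiceType).

Definition is_markov_chain (d : measure_display) (Omega : measurableType d)
  (P : probability Omega R) (D : Omega -> nat -> V) (C : set V) (p : V -> V -> R) : Prop :=
  [/\ countable C,
      (forall w k, C (D w k)),
      (forall x y, (0 <= p x y)%R),
      (forall x, C x -> \esum_(y in C) (p x y)%:E = 1) &
      (forall (k : nat) (x : nat -> V), (forall i, (i <= k.+1)%N -> C (x i)) ->
         P [set w | forall i, (i <= k.+1)%N -> D w i = x i]
         = P [set w | forall i, (i <= k)%N -> D w i = x i] * (p (x k) (x k.+1))%:E)].

Variables (C : set V) (p : V -> V -> R).

Fixpoint nstep (n : nat) (x y : V) : \bar R :=
  match n with
  | 0 => if `[< x = y >] then 1 else 0
  | n'.+1 => \esum_(z in C) (nstep n' x z * (p z y)%:E)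
  end.

Definition irreducible : Prop :=
  forall x y, C x -> C y -> exists n, 0 < nstep n x y.

(* first-passage probabilities: f_n(x,y) = P_x(first visit to y at time n), n >= 1 *)
Fixpoint first_pass (n : nat) (x y : V) : \bar R :=
  match n with
  | 0 => 0
  | n'.+1 => match n' with
             | 0 => (p x y)%:E
             | _ => \esum_(z in C `\ y) ((p x z)%:E * first_pass n' z y)
             end
  end.

Definition positive_recurrent : Prop :=
  forall x, C x ->
    \esum_(n in [set: nat]) first_pass n x x = 1 /\
    \esum_(n in [set: nat]) ((n%:R)%:E * first_pass n x x) < +oo.

End Markov.

(* The debt of a task grows by at most [q*_X] per frame and is zero whenever the
   state is zero, so if [v <= k] is the last visit of the state to zero before
   frame [k] then [d_X(k) <= (k - v) q*_X]; and the reward over [k] frames is at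
   least [k q*_X - d_X(k)].  Hence [q_X >= q*_X] as soon as [d_X(k) = o(k)], which
   holds if every visit to zero at a frame [s] is followed by another one within
   [o(s)] frames.  Only the positive recurrence of the zero state is used: the
   probability of a visit at [s] followed by no return within [j] frames is at most
   the tail [sum_(i > j) f_i] of the return-time distribution, hence
   [sum_s P(no return within s/m frames after a visit at s) <= m E[return time]],
   which is finite, and Borel--Cantelli applies. *)

From HB Require Import structures.
From mathcomp Require Import all_boot all_order all_algebra.
From mathcomp Require Import all_classical all_reals all_analysis.
From mathcomp Require Import lra zify.
Import Order.TTheory GRing.Theory Num.Theory.
Local Open Scope classical_set_scope.
Local Open Scope ring_scope.
Set Implicit Arguments. Unset Strict Implicit. Unset Printing Implicit Defensive.

Definition returns_within (V : Type) (x : nat -> V) (z : V) (s j : nat) : Prop :=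
  exists2 i, (0 < i <= j)%N & x (s + i)%N = z.

Lemma returns_withinS (V : Type) (x : nat -> V) (z : V) s j :
  ~ returns_within x z s j.+1 -> x s.+1 <> z /\ ~ returns_within x z s.+1 j.
Proof.
move=> nr; split => [xz | [i /andP[i0 ij] xi]]; apply: nr.
  by exists 1%N; rewrite ?addn1.
by exists i.+1; rewrite ?ltnS ?ij // -addSnnS.
Qed.

(* For [q > 0], [sublinear d q] says that [d k = o(k)]. *)
Definition sublinear (R : numDomainType) (d : nat -> R) (q : R) : Prop :=
  forall M : nat, exists K, forall k, (K <= k)%N -> M.+1%:R * d k <= k%:R * q.

Lemma sublinear_of_quick_returns (R : numDomainType) (V : eqType)
    (x : nat -> V) (z : V) (d : nat -> R) (q : R) (M : nat) :
  0 <= q -> x 0%N = z ->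
  (forall v, x v = z -> d v = 0) ->
  (forall v n, d (v + n)%N <= d v + n%:R * q) ->
  (forall s, x s = z -> exists j, returns_within x z s j) ->
  (exists s0, forall s, (s0 <= s)%N -> x s = z -> returns_within x z s (s %/ M.+1)) ->
  exists K, forall k, (K <= k)%N -> M.+1%:R * d k <= k%:R * q.
Proof.
move=> q0 x0 dz dadd ret [s0 quick].
have [v1 s0v1 xv1] : exists2 v, (s0 <= v)%N & x v = z.
  elim: (s0) => [|n [v nv xv]]; first by exists 0%N.
  by have [j [i /andP[i0 _] xi]] := ret v xv; exists (v + i)%N => //; lia.
exists v1 => k v1k.
(* [v] is the last visit to [z] up to time [k] *)
have exP : exists v, (v <= k)%N && (x v == z) by exists v1; rewrite v1k xv1 eqxx.
have ubP v : (v <= k)%N && (x v == z) -> (v <= k)%N by case/andP.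
have [v /andP[vk /eqP xv] vmax] := ex_maxnP exP ubP.
have v1v : (v1 <= v)%N by apply: vmax; rewrite v1k xv1 eqxx.
have [i /andP[i0 iv] xi] := quick v (leq_trans s0v1 v1v) xv.
have kvi : (k < v + i)%N.
  rewrite ltnNge; apply/negP => vik.
  by have := vmax (v + i)%N; rewrite vik xi eqxx => /(_ isT); lia.
have dk : d k <= (k - v)%:R * q by rewrite -{1}(subnKC vk) (le_trans (dadd _ _)) // dz // add0r.
have gap : (M.+1 * (k - v) <= k)%N.
  apply: (leq_trans (leq_mul (leqnn M.+1) (_ : k - v <= v %/ M.+1)%N)); first lia.
  by rewrite mulnC (leq_trans (leq_trunc_div _ _)).
apply: (le_trans (ler_wpM2l _ dk)) => //.
by rewrite mulrA -natrM ler_wpM2r // ler_nat.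
Qed.

Section Rewards.
Variables (R : realType) (S : finType).
Variables (tau : S -> nat) (r : S -> nat -> R) (qs : S -> R).
Hypothesis tau_pos : forall X, (0 < tau X)%N.
Hypothesis r_noninc : forall X i, (1 <= i)%N -> (i < tau X)%N -> r X i.+1 <= r X i.
Hypothesis r_nonneg : forall X, 0 <= r X (tau X).
Hypothesis qs_pos : forall X, 0 < qs X.

Local Notation T := (frame_len tau).

Lemma reward_ge0 X i : (1 <= i)%N -> (i <= tau X)%N -> 0 <= r X i.
Proof.
move=> i1 itau; move Ej: (tau X - i)%N => j.
elim: j i Ej i1 itau => [|j IH] i Ej i1 itau; first by have -> : i = tau X by lia.
by apply: le_trans (IH i.+1 _ _ _) (r_noninc _ _); lia.
Qed.

Lemma exec_count_le_period sched X t : (exec_count tau sched X t <= tau X)%N.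
Proof.
rewrite /exec_count; apply: (@leq_trans (\sum_(t - t %% tau X <= u < t.+1) 1)%N).
  by apply: leq_sum => u _; apply: leq_b1.
rewrite sum_nat_const_nat muln1.
by have := ltn_pmod t (tau_pos X); have := leq_mod t (tau X); lia.
Qed.

Lemma slot_reward_ge0 sched X t : 0 <= slot_reward tau r sched X t.
Proof.
rewrite /slot_reward; case: eqP => // E.
apply: reward_ge0; last exact: exec_count_le_period.
rewrite /exec_count (@big_cat_nat _ _ _ t) ?leq_subr //= big_nat1 E eqxx /=; lia.
Qed.

Lemma frame_reward_ge0 sched X k : 0 <= frame_reward tau r sched X k.
Proof. by apply: sumr_ge0 => u _; apply: slot_reward_ge0. Qed.

Lemma cum_reward_le sched X t1 t2 : (t1 <= t2)%N ->
  cum_reward tau r sched X t1 <= cum_reward tau r sched X t2.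
Proof.
move=> h; rewrite /cum_reward (big_cat_nat _ h) //= lerDl.
by apply: sumr_ge0 => u _; apply: slot_reward_ge0.
Qed.

Lemma debt_ge0 sched X k : 0 <= debt tau r qs sched X k.
Proof. by case: k => //= k; rewrite le_max lexx. Qed.

Lemma debt_leS sched X k :
  debt tau r qs sched X k.+1 <= debt tau r qs sched X k + qs X.
Proof.
rewrite /= ge_max addr_ge0 ?debt_ge0 ?(ltW (qs_pos X)) //=.
by rewrite lerBlDr lerDl frame_reward_ge0.
Qed.

Lemma debt_leD sched X v n :
  debt tau r qs sched X (v + n) <= debt tau r qs sched X v + n%:R * qs X.
Proof.
elim: n => [|n IH]; first by rewrite addn0 mul0r addr0.
rewrite addnS (le_trans (debt_leS _ _ _)) //.
by rewrite -natr1 mulrDl mul1r addrA lerD2r.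
Qed.

Lemma cum_reward_frames sched X k :
  k%:R * qs X - debt tau r qs sched X k <= cum_reward tau r sched X (k * T).
Proof.
elim: k => [|k IH]; first by rewrite mul0r subr0 mul0n /cum_reward big_geq.
have kT : (k * T <= k.+1 * T)%N by rewrite leq_mul2r leqnSn orbT.
have debtS : debt tau r qs sched X k + qs X - frame_reward tau r sched X k.+1
   <= debt tau r qs sched X k.+1 by rewrite /= le_max lexx orbT.
rewrite /cum_reward (big_cat_nat _ kT) //= -/(cum_reward _ _ _ _ _).
move: debtS; rewrite /frame_reward /= -natr1 mulrDl mul1r; lra.
Qed.

Lemma frame_len_gt0 : (0 < T)%N.
Proof. by rewrite /frame_len; elim/big_ind: _ => // x y; rewrite lcmn_gt0 => -> ->. Qed.

Lemma cum_reward_ge sched X t :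
  (t %/ T)%:R * qs X - debt tau r qs sched X (t %/ T) <= cum_reward tau r sched X t.
Proof.
exact: le_trans (cum_reward_frames _ _ _) (cum_reward_le _ _ (leq_trunc_div _ _)).
Qed.

Lemma cum_reward_avg_ge sched X (e : R) : 0 < e ->
  sublinear (debt tau r qs sched X) (qs X) ->
  exists N, forall t, (N <= t)%N ->
    qs X - e <= cum_reward tau r sched X t / (t%:R / T%:R).
Proof.
move=> e0 sub; have q0 := qs_pos X; have T0 := frame_len_gt0.
pose M := Num.Def.archi_bound (2 * qs X / e).
have Me : 2 * qs X < M%:R * e.
  by rewrite -ltr_pdivrMr // archi_boundP //; apply: divr_ge0; lra.
have [K HK] := sub M.
exists ((maxn K M).+1 * T)%N => t Nt.
set k := (t %/ T)%N.
have kKM : (maxn K M < k)%N by rewrite -(mulnK (maxn K M).+1 T0) leq_div2r.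
have t0 : (0 < t)%N by apply: leq_trans Nt; rewrite muln_gt0 T0.
have tk : (t%:R : R) < k.+1%:R * T%:R by rewrite -natrM ltr_nat ltn_ceil.
have dk := HK k (ltnW (leq_ltn_trans (leq_maxl K M) kKM)).
have Mk : (M%:R : R) <= k%:R by rewrite ler_nat ltnW // (leq_ltn_trans (leq_maxr K M)).
have ct := cum_reward_ge sched X t; rewrite -/k in ct.
have c0 : 0 <= cum_reward tau r sched X t.
  by rewrite (le_trans _ (cum_reward_le _ _ (leq0n t))) // /cum_reward big_geq.
have d0 := debt_ge0 sched X k.
have k0 : (0 : R) <= k%:R by [].
have d2 : 2 * debt tau r qs sched X k <= k%:R * e.
  rewrite -(ler_pM2l (ltr0Sn _ M)).
  have : k%:R * (2 * qs X) <= k%:R * (M%:R * e) by rewrite ler_wpM2l // ltW.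
  rewrite -natr1 in dk *; nra.
have q2 : 2 * qs X <= k%:R * e by rewrite (le_trans (ltW Me)) // ler_pM2r.
rewrite invf_div mulrA ler_pdivlMr ?ltr0n //.
have [qe|qe] := lerP 0 (qs X - e); last first.
  by rewrite (le_trans _ (mulr_ge0 c0 _)) // nmulr_rle0 ?ltr0n.
apply: (le_trans (ler_wpM2l qe (ltW tk))).
rewrite mulrA ler_pM2r ?ltr0n // -natr1; nra.
Qed.

Lemma avg_reward_meets_of_sublinear sched X :
  sublinear (debt tau r qs sched X) (qs X) -> avg_reward_meets tau r qs sched X.
Proof.
move=> sub; rewrite /avg_reward_meets limn_einf_lim.
rewrite (cvg_lim _ (@cvg_einfs_sup _ _)) //.
apply/lee_subgt0Pr => e e0.
have [N HN] := cum_reward_avg_ge e0 sub.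
apply: (@le_trans _ _ (einfs (fun t => (cum_reward tau r sched X t /
   (t%:R / T%:R))%:E) N)); last by apply: ereal_sup_ubound; exists N.
by apply: le_ereal_inf_tmp => _ [m /= Nm <-]; rewrite lee_fin HN.
Qed.

End Rewards.

Section Prefix.
Variables (R : realType) (S : finType).
Variables (tau : S -> nat) (r : S -> nat -> R) (qs : S -> R).

Local Notation T := (frame_len tau).

Definition sched_prefix (N : nat) (s : nat -> option S) : {ffun 'I_N -> option S} :=
  [ffun i => s (nat_of_ord i)].

Definition sched_of_prefix N (pi : {ffun 'I_N -> option S}) : nat -> option S :=
  fun u => if @insub _ (fun u => u < N)%N 'I_N u is Some i then pi i else None.

Lemma sched_of_prefixE N s u : (u < N)%N -> sched_of_prefix (sched_prefix N s) u = s u.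
Proof. by move=> uN; rewrite /sched_of_prefix insubT /= ffunE. Qed.

Lemma exec_count_eq s1 s2 X u : (forall u', (u' <= u)%N -> s1 u' = s2 u') ->
  exec_count tau s1 X u = exec_count tau s2 X u.
Proof.
move=> s12; rewrite /exec_count big_nat_cond [RHS]big_nat_cond.
by apply: eq_bigr => i /andP[/andP[_ iu] _]; rewrite s12.
Qed.

Lemma slot_reward_eq s1 s2 X u : (forall u', (u' <= u)%N -> s1 u' = s2 u') ->
  slot_reward tau r s1 X u = slot_reward tau r s2 X u.
Proof. by move=> s12; rewrite /slot_reward s12 // (exec_count_eq X s12). Qed.

Lemma debt_eq s1 s2 X k : (forall u, (u < k * T)%N -> s1 u = s2 u) ->
  debt tau r qs s1 X k = debt tau r qs s2 X k.
Proof.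
elim: k => [//|k IH] s12 /=.
rewrite IH => [|u ukT]; last by rewrite s12 // (leq_trans ukT) // leq_mul2r leqnSn orbT.
congr (Num.max _ (_ - _)); rewrite /frame_reward big_nat_cond [RHS]big_nat_cond.
apply: eq_bigr => u /andP[/andP[_ hu] _]; apply: slot_reward_eq => u' hu'.
by apply: s12; apply: leq_ltn_trans hu.
Qed.

Lemma sys_state_prefix N s k : (k * T <= N)%N ->
  sys_state tau r qs s k = sys_state tau r qs (sched_of_prefix (sched_prefix N s)) k.
Proof.
move=> kTN; apply/ffunP => X; rewrite !ffunE; apply: debt_eq => u ukT.
by rewrite sched_of_prefixE // (leq_trans ukT).
Qed.

Lemma measurable_sys_state d (Omega : measurableType d) (sched : Omega -> nat -> option S) :
  (forall t a, measurable [set w | sched w t = a]) ->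
  forall k v, measurable [set w | sys_state tau r qs (sched w) k = v].
Proof.
move=> sched_meas k v; set N := (k * T)%N.
have -> : [set w | sys_state tau r qs (sched w) k = v] =
  \bigcup_(pi in [set pi | sys_state tau r qs (sched_of_prefix pi) k = v])
     \bigcap_(i in [set: 'I_N]) [set w | sched w i = pi i].
  apply/seteqP; split => w /=.
    move=> h; exists (sched_prefix N (sched w)); first by rewrite /= -sys_state_prefix.
    by move=> i _ /=; rewrite ffunE.
  move=> [pi /= hpi hw]; rewrite (sys_state_prefix (N := N)) //.
  suff -> : sched_prefix N (sched w) = pi by [].
  by apply/ffunP => i; rewrite ffunE; apply: hw.
apply: fin_bigcup_measurable; first exact: finite_finset.
move=> pi _; apply: fin_bigcap_measurable; first exact: finite_finset.
by move=> i _; apply: sched_meas.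
Qed.

Lemma sys_state_paths_finite k : exists L : seq (seq {ffun S -> R}),
  forall s, [seq sys_state tau r qs s i | i <- iota 0 k.+1] \in L.
Proof.
set N := (k * T)%N.
exists [seq [seq sys_state tau r qs (sched_of_prefix pi) i | i <- iota 0 k.+1]
       | pi <- enum {ffun 'I_N -> option S}] => s.
suff -> : [seq sys_state tau r qs s i | i <- iota 0 k.+1] =
    [seq sys_state tau r qs (sched_of_prefix (sched_prefix N s)) i | i <- iota 0 k.+1].
  by apply: map_f; rewrite mem_enum.
apply/eq_in_map => i; rewrite mem_iota add0n => /andP[_ ik].
by rewrite (sys_state_prefix (N := N)) // leq_mul2r -ltnS ik orbT.
Qed.

End Prefix.

Section Avoid.
Variables (R : realType) (V : choiceType) (C : set V) (p : V -> V -> R) (z0 : V).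
Hypothesis p_ge0 : forall x y, (0 <= p x y)%R.
Hypothesis p_sum1 : forall x, C x -> (\esum_(y in C) (p x y)%:E = 1)%E.
Hypothesis Cz0 : C z0.
Local Open Scope ereal_scope.

(* probability that the chain started at [x] does not visit [z0] at times [1, ..., j] *)
Fixpoint avoid (j : nat) (x : V) : \bar R :=
  match j with
  | 0 => 1
  | j'.+1 => \esum_(y in C `\ z0) ((p x y)%:E * avoid j' y)
  end.

Lemma avoid_ge0 j x : 0 <= avoid j x.
Proof.
elim: j x => [|j IH] x //=.
by apply: esum_ge0 => y _; rewrite mule_ge0 // lee_fin.
Qed.

Lemma first_pass_ge0 n x y : 0 <= first_pass C p n x y.
Proof.
elim: n x => [|[|n] IH] x //=; first exact: (p_ge0 x y).
by apply: esum_ge0 => z _; apply: mule_ge0; [exact: p_ge0 | exact: IH].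
Qed.

Lemma avoid_add_first_pass j x : C x ->
  avoid j x + \sum_(1 <= i < j.+1) first_pass C p i x z0 = 1.
Proof.
elim: j x => [|j IH] x Cx; first by rewrite big_geq // adde0.
rewrite big_ltn // big_add1 /=.
have -> : \sum_(1 <= i < j.+1) first_pass C p i.+1 x z0 =
   \sum_(1 <= i < j.+1) \esum_(y in C `\ z0) ((p x y)%:E * first_pass C p i y z0).
  by rewrite big_nat_cond [RHS]big_nat_cond; apply: eq_bigr => -[|i].
have pfp_ge0 y i : 0 <= (p x y)%:E * first_pass C p i y z0.
  by apply: mule_ge0; [exact: p_ge0 | exact: first_pass_ge0].
rewrite addeCA -esum_sum; last by move=> y i _ _; exact: pfp_ge0.
rewrite -esumD; last 2 first.
- by move=> y _; apply: mule_ge0; [exact: p_ge0 | exact: avoid_ge0].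
- by move=> y _; apply: sume_ge0 => i _; exact: pfp_ge0.
rewrite (eq_esum (b := fun y => (p x y)%:E)); last first.
  move=> y [Cy _]; rewrite -ge0_sume_distrr; last by move=> i _; apply: first_pass_ge0.
  rewrite -ge0_muleDr ?avoid_ge0 ?sume_ge0 ?IH ?mule1 // => i _.
  exact: first_pass_ge0.
rewrite -(@p_sum1 x Cx) [RHS](esumID [set z0]); last by move=> y _; rewrite lee_fin.
have -> : C `&` [set z0] = [set z0] by apply/seteqP; split => y /=; [case | move=> ->].
by rewrite esum_set1 ?lee_fin // setDE.
Qed.

Section Recurrent.
Hypothesis return_prob : \esum_(n in [set: nat]) first_pass C p n z0 z0 = 1.
Hypothesis mean_return : \esum_(n in [set: nat]) ((n%:R)%:E * first_pass C p n z0 z0) < +oo.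

Let f i := first_pass C p i z0 z0.
Let f_ge0 i : 0 <= f i. Proof. exact: first_pass_ge0. Qed.

Lemma first_pass_series1 : \sum_(i <oo) f i = 1.
Proof. by rewrite nneseries_esumT // return_prob. Qed.

Lemma avoid_tail n : avoid n z0 = \sum_(n.+1 <= i <oo) f i.
Proof.
have := first_pass_series1.
rewrite (@nneseries_split _ _ 0 n.+1) // add0n big_ltn // /f /= add0e.
set Sn := \sum_(1 <= i < n.+1) _; set Tn := \sum_(n.+1 <= i <oo) _ => STn.
have Sn0 : 0 <= Sn by apply: sume_ge0 => i _; exact: first_pass_ge0.
have Sn1 : Sn <= 1 by rewrite -(avoid_add_first_pass n Cz0) leeDr // avoid_ge0.
have Snfin : Sn \is a fin_num by rewrite ge0_fin_numE // (le_lt_trans Sn1) // ltey.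
have : avoid n z0 + Sn = Tn + Sn by rewrite avoid_add_first_pass // -STn addeC.
by move/(congr1 (fun y => y - Sn)); rewrite !addeK.
Qed.

Lemma sum_avoid_div_le m : (0 < m)%N ->
  \sum_(s <oo) avoid (s %/ m) z0 <= (m%:R)%:E * \sum_(i <oo) ((i%:R)%:E * f i).
Proof.
move=> m0.
have E s : avoid (s %/ m) z0 = \sum_(i <oo) (if (s %/ m < i)%N then f i else 0).
  rewrite avoid_tail eseries_cond.
  rewrite -(eq_eseriesl _ (P := fun i => true && (s %/ m < i)%N)) //.
  by rewrite eseries_mkcondr.
rewrite (eq_eseriesr (fun s _ => E s)).
rewrite nneseries_interchange; last by move=> i j; case: ifP.
rewrite -nneseriesZl; last by move=> i _; apply: mule_ge0 => //; rewrite lee_fin.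
apply: lee_nneseries; first by move=> i _ _; apply: nneseries_ge0 => j _ _; case: ifP.
move=> i _.
(* [s %/ m < i] holds exactly for the [i * m] indices [s < i * m] *)
rewrite (@nneseries_split _ _ 0 (i * m)); last by move=> k _; case: ifP.
rewrite eseries0 ?adde0; last by move=> k; rewrite add0n ltn_divLR // ltnNge => ->.
rewrite add0n big_nat_cond.
rewrite (eq_bigr (fun _ => f i)); last by move=> k /andP[/andP[_ hk] _]; rewrite ltn_divLR // hk.
(* the ring multiple [*+] on [\bar R] is convertible to [enatmul] *)
rewrite -big_nat_cond sumr_const_nat subn0 -[(_ *+ _)%R]/(_ *+ _).
by rewrite -mule_natl muleA -EFinM -natrM mulnC.
Qed.

Lemma sum_avoid_div_fin m : (0 < m)%N -> \sum_(s <oo) avoid (s %/ m) z0 < +oo.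
Proof.
move=> m0; apply: (le_lt_trans (sum_avoid_div_le m0)).
rewrite lte_mul_pinfty // nneseries_esumT // => n.
by apply: mule_ge0 => //; rewrite lee_fin.
Qed.

Lemma lb_avoid_le0 x : (forall j, x <= avoid j z0) -> x <= 0.
Proof.
move=> xavoid.
have fin : \sum_(0 <= k <oo | xpredT k) f k < +oo by rewrite first_pass_series1 ltry.
have tail0 := nneseries_tail_cvg fin (fun k _ => f_ge0 k).
rewrite -(cvg_lim _ tail0) //; apply: lime_ge; first by apply/cvg_ex; exists 0.
exists 1%N => // N /= N1.
have -> : N = N.-1.+1 by rewrite prednK.
by rewrite -avoid_tail.
Qed.

End Recurrent.
End Avoid.

Section MeasureSeq.
Context d (Omega : measurableType d) (R : realType) (mu : {measure set Omega -> \bar R}).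
Local Open Scope ereal_scope.

Lemma le_measure_bigsetU_seq (I : Type) (l : seq I) (F : I -> set Omega) :
  (forall i, measurable (F i)) ->
  mu (\big[setU/set0]_(i <- l) F i) <= \sum_(i <- l) mu (F i).
Proof.
move=> mF; elim: l => [|a l IH]; first by rewrite !big_nil measure0.
have mU : measurable (\big[setU/set0]_(i <- l) F i).
  by apply: bigsetU_measurable => i _; apply: mF.
rewrite !big_cons; apply: le_trans (measureU2 mu (mF a) mU) _.
by rewrite leeD2l.
Qed.

Lemma measure_bigsetU_seq (I : choiceType) (l : seq I) (F : I -> set Omega) :
  (forall i, measurable (F i)) -> uniq l ->
  (forall i j, i != j -> F i `&` F j = set0) ->
  mu (\big[setU/set0]_(i <- l) F i) = \sum_(i <- l) mu (F i).
Proof.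
move=> mF; elim: l => [|a l IH]; first by rewrite !big_nil measure0.
move=> /= /andP[al ul] dis.
have mU : measurable (\big[setU/set0]_(i <- l) F i).
  by apply: bigsetU_measurable => i _; apply: mF.
rewrite !big_cons measureU //; first by congr (_ + _); apply: IH.
apply/seteqP; split => // w [Fa]; rewrite -bigcup_seq => -[i /= il Fi].
have ai : a != i by apply: contraNneq al => ->.
by have := dis _ _ ai; move/seteqP => [+ _] => /(_ w (conj Fa Fi)).
Qed.

End MeasureSeq.

Section Chain.
Variables (R : realType) (V : choiceType) (d : measure_display) (Omega : measurableType d)
  (P : probability Omega R) (D : Omega -> nat -> V) (C : set V) (p : V -> V -> R) (z0 : V).
Hypothesis HM : is_markov_chain P D C p.
Hypothesis Dmeas : forall k v, measurable [set w | D w k = v].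
Hypothesis Dfin : forall s, exists L : seq (seq V),
  forall w, [seq D w i | i <- iota 0 s.+1] \in L.
Local Open Scope ereal_scope.

Definition cylinder s (x : nat -> V) := [set w | forall i, (i <= s)%N -> D w i = x i].
Definition no_return s j := [set w | ~ returns_within (D w) z0 s j].

Lemma measurable_cylinder s x : measurable (cylinder s x).
Proof.
have -> : cylinder s x = \bigcap_(i in [set i | (i <= s)%N]) [set w | D w i = x i].
  by apply/seteqP; split => w /= h i hi; apply: h.
by apply: bigcap_measurable; [exists 0%N | move=> i _; apply: Dmeas].
Qed.

Lemma measurable_no_return s j : measurable (no_return s j).
Proof.
have -> : no_return s j =
    ~` \bigcup_(i in [set i | (0 < i <= j)%N]) [set w | D w (s + i)%N = z0].
  by apply/seteqP; split => w /= nr [i ij Di]; apply: nr; exists i.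
by apply/measurableC/bigcup_measurable => i _; apply: Dmeas.
Qed.

Let measurable_cylinder_no_return s x j : measurable (cylinder s x `&` no_return s j).
Proof. exact: measurableI (measurable_cylinder _ _) (measurable_no_return _ _). Qed.

Lemma cylinder_no_return_le j s x :
  P (cylinder s x `&` no_return s j) <= P (cylinder s x) * avoid C p z0 j (x s).
Proof.
have [_ DC p_ge0 p_sum1 Hmk] := HM.
elim: j s x => [|j IH] s x.
  by rewrite /= mule1 le_measure ?inE //; exact: measurable_cylinder.
have [Cx|Cx] := pselect (forall i, (i <= s)%N -> C (x i)); last first.
  suff -> : cylinder s x = set0 by rewrite set0I measure0 mul0e.
  by apply/seteqP; split => // w wx; apply: Cx => i si; rewrite -(wx i si); apply: DC.
(* [Ys]: the states other than [z0] that the chain can reach at time [s+1] *)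
have [L HL] := Dfin s.+1.
set Ys := [seq y <- undup [seq nth z0 t s.+1 | t <- L] | (y != z0) && `[< C y >]].
set x' := fun y i => if i == s.+1 then y else x i.
have x'E y i : (i <= s)%N -> x' y i = x i by move=> si; rewrite /x' ltn_eqF.
have cylinderE y : cylinder s (x' y) = cylinder s x.
  by apply/seteqP; split => w /= h i si; rewrite h ?x'E.
have cover : cylinder s x `&` no_return s j.+1 `<=`
    \big[setU/set0]_(y <- Ys) (cylinder s.+1 (x' y) `&` no_return s.+1 j).
  move=> w [wx nrS]; have [Dz nr] := returns_withinS nrS.
  rewrite -bigcup_seq; exists (D w s.+1).
    rewrite /= /Ys mem_filter mem_undup; apply/andP; split.
      by apply/andP; split; [apply/eqP | apply/asboolP; apply: DC].
    have -> : D w s.+1 = nth z0 [seq D w i | i <- iota 0 s.+2] s.+1.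
      by rewrite (nth_map 0%N) ?size_iota // nth_iota.
    exact: map_f.
  split => // i; rewrite leq_eqVlt => /predU1P[->|si]; first by rewrite /x' eqxx.
  by rewrite x'E // wx.
apply: (le_trans (le_measure _ _ _ cover)); rewrite ?inE //.
  by apply: bigsetU_measurable => y _.
apply: (le_trans (le_measure_bigsetU_seq _ _ _)) => //.
apply: (@le_trans _ _ (\sum_(y <- Ys) (P (cylinder s x) * ((p (x s) y)%:E * avoid C p z0 j y)))).
  rewrite big_seq [X in _ <= X]big_seq; apply: lee_sum => y.
  rewrite /Ys mem_filter => /andP[/andP[yz /asboolP Cy] _].
  apply: (le_trans (IH s.+1 (x' y))).
  (* the Markov property extends the cylinder by one step *)
  rewrite /cylinder Hmk; last first.
    move=> i; rewrite leq_eqVlt ltnS => /predU1P[->|si]; first by rewrite /x' eqxx.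
    by rewrite x'E //; apply: Cx.
  by rewrite -/(cylinder s (x' y)) cylinderE x'E // /x' eqxx muleA.
rewrite -ge0_sume_distrr => [|y _]; last by rewrite mule_ge0 ?lee_fin ?avoid_ge0.
rewrite lee_wpmul2l // fsbig_seq /=; last by rewrite filter_uniq // undup_uniq.
apply: esum_ge; exists [set` Ys] => //; split; first exact: finite_seq.
move=> y /=; rewrite /Ys mem_filter => /andP[/andP[yz /asboolP Cy] _].
by split => // /= yz0; rewrite yz0 eqxx in yz.
Qed.

Lemma visit_no_return_le s j :
  P ([set w | D w s = z0] `&` no_return s j) <= avoid C p z0 j z0.
Proof.
have [_ DC p_ge0 p_sum1 Hmk] := HM.
have [L HL] := Dfin s.
set path := fun w => [seq D w i | i <- iota 0 s.+1].
set cyl_of := fun t : seq V => [set w | path w = t].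
have cyl_ofE t : size t = s.+1 -> cyl_of t = cylinder s (nth z0 t).
  move=> st; apply/seteqP; split => w /=.
    by move=> <- i hi; rewrite /path (nth_map 0%N) ?size_iota ?ltnS // nth_iota ?ltnS.
  move=> h; apply: (@eq_from_nth _ z0); first by rewrite size_map size_iota st.
  move=> i; rewrite size_map size_iota => hi.
  by rewrite (nth_map 0%N) ?size_iota // nth_iota // add0n; apply: h; rewrite -ltnS.
have cyl_of0 t : size t != s.+1 -> cyl_of t = set0.
  move=> st; apply/seteqP; split => w //= E.
  by move: st; rewrite -E size_map size_iota eqxx.
have mcyl_of t : measurable (cyl_of t).
  have [st|st] := eqVneq (size t) s.+1; first by rewrite cyl_ofE //; exact: measurable_cylinder.
  by rewrite cyl_of0.
set G := [set w | D w s = z0] `&` no_return s j.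
have mG : measurable G by apply: measurableI; [exact: Dmeas | exact: measurable_no_return].
have cover : G `<=` \big[setU/set0]_(t <- undup L) (G `&` cyl_of t).
  by move=> w Gw; rewrite -bigcup_seq; exists (path w); rewrite /= ?mem_undup ?HL.
apply: (le_trans (le_measure _ _ _ cover)); rewrite ?inE //.
  by apply: bigsetU_measurable => t _; exact: measurableI.
apply: (le_trans (le_measure_bigsetU_seq _ _ _)); first by move=> t; exact: measurableI.
apply: (@le_trans _ _ (\sum_(t <- undup L) (P (cyl_of t) * avoid C p z0 j z0))).
  apply: lee_sum => t _.
  have [st|st] := eqVneq (size t) s.+1; last by rewrite cyl_of0 // setI0 !measure0 mul0e.
  have [tz|tz] := eqVneq (nth z0 t s) z0; last first.
    suff -> : G `&` cyl_of t = set0 by rewrite measure0 mule_ge0 ?avoid_ge0.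
    apply/seteqP; split => // w [[/= Dz _]]; rewrite (cyl_ofE _ st) => hw.
    by move: tz; rewrite -(hw s (leqnn s)) Dz eqxx.
  have := cylinder_no_return_le j s (nth z0 t); rewrite tz (cyl_ofE _ st).
  move=> /(le_trans _); apply; apply: le_measure; rewrite ?inE.
  - exact: measurableI mG (measurable_cylinder _ _).
  - exact: measurable_cylinder_no_return.
  - by move=> w [[_ hf] hc].
rewrite -ge0_sume_distrl => [|t _]; last exact: measure_ge0.
rewrite -measure_bigsetU_seq ?undup_uniq // => [|t1 t2 ne].
  by rewrite -[leRHS]mul1e lee_wpmul2r ?avoid_ge0 ?probability_le1 //; exact: bigsetU_measurable.
by apply/seteqP; split => // w [/= E1 E2]; move: ne; rewrite -E1 -E2 eqxx.
Qed.

Section Recurrent.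
Hypothesis Cz0 : C z0.
Hypothesis return_prob : \esum_(n in [set: nat]) first_pass C p n z0 z0 = 1.
Hypothesis mean_return : \esum_(n in [set: nat]) ((n%:R)%:E * first_pass C p n z0 z0) < +oo.

Let visit_no_return s j := [set w | D w s = z0] `&` no_return s j.

Let measurable_visit_no_return s j : measurable (visit_no_return s j).
Proof. by apply: measurableI; [exact: Dmeas | exact: measurable_no_return]. Qed.

(* Borel--Cantelli; the series converges because the mean return time is finite *)
Lemma slow_returns_null M : P (lim_sup_set (fun s => visit_no_return s (s %/ M.+1))) = 0.
Proof.
have [_ _ p_ge0 p_sum1 _] := HM.
apply: lim_sup_set_cvg0 => [s|]; first exact: measurable_visit_no_return.
apply: le_lt_trans (sum_avoid_div_fin p_ge0 p_sum1 Cz0 return_prob mean_return (ltn0Sn M)).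
apply: lee_nneseries => [s _ _|s _]; first exact: measure_ge0.
exact: visit_no_return_le.
Qed.

Lemma no_return_null s : P (\bigcap_j visit_no_return s j) = 0.
Proof.
have [_ _ p_ge0 p_sum1 _] := HM.
apply/eqP; rewrite eq_le measure_ge0 andbT.
apply: (lb_avoid_le0 p_ge0 p_sum1 Cz0 return_prob) => j.
apply: le_trans (visit_no_return_le s j); apply: le_measure; rewrite ?inE.
- by apply: bigcapT_measurable => i; exact: measurable_visit_no_return.
- exact: measurable_visit_no_return.
- by move=> w /(_ j I).
Qed.

Lemma returns_ae : {ae P, forall w,
  (forall s, D w s = z0 -> exists j, returns_within (D w) z0 s j) /\
  (forall M, exists s0, forall s, (s0 <= s)%N -> D w s = z0 ->
     returns_within (D w) z0 s (s %/ M.+1))}.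
Proof.
set N := (\bigcup_M lim_sup_set (fun s => visit_no_return s (s %/ M.+1))) `|`
         (\bigcup_s \bigcap_j visit_no_return s j).
have negN : P.-negligible N.
  apply: negligibleU; apply: negligible_bigcup => k; apply/negligibleP.
  - apply: bigcap_measurable => [|n _]; first by exists 0%N.
    by apply: bigcup_measurable => i _; exact: measurable_visit_no_return.
  - exact: slow_returns_null.
  - by apply: bigcapT_measurable => j; exact: measurable_visit_no_return.
  - exact: no_return_null.
apply: negligibleS negN => w /= notQ; apply: contrapT => notN; apply: notQ; split.
  move=> s Ds; apply: contrapT => nr; apply: notN; right; exists s => // j _.
  by split => // -[i ij Di]; apply: nr; exists j, i.
move=> M; have /existsNP[s0 hs0] : ~ lim_sup_set (fun s => visit_no_return s (s %/ M.+1)) w.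
  by move=> h; apply: notN; left; exists M.
exists s0 => s s0s Ds; apply: contrapT => nr; apply: hs0; exists s => //.
Qed.

End Recurrent.
End Chain.

Theorem lemma3 (R : realType) (S : finType)
  (tau : S -> nat) (r : S -> nat -> R) (qs : S -> R)
  (tau_pos : forall X, (0 < tau X)%N)
  (r_noninc : forall X i, (1 <= i)%N -> (i < tau X)%N -> r X i.+1 <= r X i)
  (r_nonneg : forall X, 0 <= r X (tau X))
  (qs_pos : forall X, 0 < qs X)
  (d : measure_display) (Omega : measurableType d) (P : probability Omega R)
  (sched : Omega -> nat -> option S)
  (sched_meas : forall t a, measurable [set w | sched w t = a])
  (C : set {ffun S -> R}) (p : {ffun S -> R} -> {ffun S -> R} -> R)
  (Hmarkov : is_markov_chain P (fun w k => sys_state tau r qs (sched w) k) C p)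
  (Hirr : irreducible C p)
  (Hpos : positive_recurrent C p) :
  {ae P, forall w, forall X : S, avg_reward_meets tau r qs (sched w) X}.
Proof.
have [_ DC _ _ _] := Hmarkov.
have state0 s : sys_state tau r qs s 0 = 0 by apply/ffunP => X; rewrite !ffunE.
have C0 : C 0.
  have [w _] : [set: Omega] !=set0.
    have [PT|/set0P//] := eqVneq [set: Omega] set0.
    by have /eqP := probability_setT P; rewrite PT measure0 eq_sym eqe oner_eq0.
  by rewrite -(state0 (sched w)); apply: DC.
have [return_prob mean_return] := Hpos 0 C0.
have paths_fin k : exists L : seq (seq {ffun S -> R}), forall w,
    [seq sys_state tau r qs (sched w) i | i <- iota 0 k.+1] \in L.
  by have [L HL] := sys_state_paths_finite tau r qs k; exists L => w; apply: HL.
have := returns_ae Hmarkov (measurable_sys_state tau r qs sched_meas) paths_fin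
  C0 return_prob mean_return.
apply: filterS => w [ret quick] X.
apply: avg_reward_meets_of_sublinear => // M.
have debt0 v : sys_state tau r qs (sched w) v = 0 -> debt tau r qs (sched w) X v = 0.
  by move/ffunP/(_ X); rewrite !ffunE.
exact: sublinear_of_quick_returns (ltW (qs_pos X)) (state0 _) debt0
  (debt_leD tau_pos r_noninc r_nonneg qs_pos _ X) ret (quick M).
Qed.
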